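(* Every Petri net and every VASS, viewed as an ordered functional transition system, is cover-flattable: for every initial state $x_0$, $(\mathfrak X,x_0)$ is cover-flattable.
   Context: A VASS of dimension $k$ has a finite set $Q$ of control states and finitely many transitions, each given by $q,q'\in Q$ and $\vec a,\vec b\in\mathbb N^k$ and acting as the partial map $f(q,\vec x)=(q',\vec x+\vec b-\vec a)$, defined on states of control state $q$ with $\vec x\ge\vec a$. The state space $Q\times\mathbb N^k$ is ordered by $(q,\vec x)\le(q',\vec y)$ iff $q=q'$ and $\vec x\le\vec y$ componentwise. A Petri net on $k$ places is the case of a single control state (state space $\mathbb N^k$). Ordered functional transition system: partial order plus finite set of partial monotonic maps (upward-closed domain, monotone on it), with $x\to f(x)$. $Cover(x)=\downarrow Post^*(\downarrow x)$, $Post^*$ the reachability set. Flat: there are finitely many words $w_1,\dots,w_k$ over the set of transition maps such that every fireable sequence of transitions (from the initial state considered) lies in $w_1^*\cdots w_k^*$. A morphism $\varphi:\mathfrak X_1\to\mathfrak X$ maps states to states and transition maps to transition maps such that $s'=f_1(s)$ implies $\varphi(s)\in\operatorname{dom}\varphi(f_1)$ and $\varphi(s')=\varphi(f_1)(\varphi(s))$. A monotonic flattening of $\mathfrak X$ is $(\mathfrak X_1,\varphi)$ with $\mathfrak X_1$ a flat ordered functional transition system and $\varphi$ a morphism monotone on states. $(\mathfrak X,x_0)$ is cover-flattable iff there are a monotonic flattening $(\mathfrak X_1,\varphi)$ of $\mathfrak X$ and a state $x_1$ of $\mathfrak X_1$ with $\varphi(x_1)=x_0$ and $Cover_{\mathfrak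 X}(x_0)=\downarrow\varphi\langle Cover_{\mathfrak X_1}(x_1)\rangle$. *)

From mathcomp Require Import all_boot.
Set Implicit Arguments. Unset Strict Implicit. Unset Printing Implicit Defensive.

Record ofts := Ofts {
  st : Type;
  le : st -> st -> Prop;
  lab : finType;
  tr : lab -> st -> option st
}.

Definition is_ofts (X : ofts) : Prop :=
  (forall x, @le X x x) /\
  (forall x y, @le X x y -> @le X y x -> x = y) /\
  (forall x y z, @le X x y -> @le X y z -> @le X x z) /\
  (forall a x y x', @le X x y -> @tr X a x = Some x' ->
      exists y', @tr X a y = Some y') /\
  (forall a x y x' y', @le X x y -> @tr X a x = Some x' -> @tr X a y = Some y' ->
      @le X x' y').

Inductive reach (X : ofts) : st X -> st X -> Prop :=
| reach_refl x : reach x x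
| reach_step a x y z : @tr X a x = Some y -> reach y z -> reach x z.

Definition cover (X : ofts) (x : st X) (z : st X) : Prop :=
  exists x' y, @le X x' x /\ reach x' y /\ @le X z y.

Fixpoint run (X : ofts) (x : st X) (w : seq (lab X)) : option (st X) :=
  match w with
  | [::] => Some x
  | a :: w' => match @tr X a x with Some y => run y w' | None => None end
  end.

Definition fireable (X : ofts) (x : st X) (w : seq (lab X)) : Prop :=
  exists y, run x w = Some y.

(* [in_bounded ws w] : w belongs to w_1^* w_2^* ... w_k^* where ws = [w_1;..;w_k]. *)
Fixpoint in_bounded (L : Type) (ws : seq (seq L)) (w : seq L) : Prop :=
  match ws with
  | [::] => w = [::]
  | wi :: ws' => exists (n : nat) (u : seq L),
      w = flatten (nseq n wi) ++ u /\ in_bounded ws' u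
  end.

Definition flat (X : ofts) (x : st X) : Prop :=
  exists ws : seq (seq (lab X)),
    forall w, fireable x w -> in_bounded ws w.

Definition morphism (X1 X : ofts) (phiS : st X1 -> st X) (phiL : lab X1 -> lab X)
  : Prop :=
  forall a s s', @tr X1 a s = Some s' -> @tr X (phiL a) (phiS s) = Some (phiS s').

Definition monotone_on_states (X1 X : ofts) (phiS : st X1 -> st X) : Prop :=
  forall s t, @le X1 s t -> @le X (phiS s) (phiS t).

Definition cover_flattable (X : ofts) (x0 : st X) : Prop :=
  exists (X1 : ofts) (phiS : st X1 -> st X) (phiL : lab X1 -> lab X) (x1 : st X1),
    is_ofts X1 /\ morphism phiS phiL /\ monotone_on_states phiS /\
    flat x1 /\ phiS x1 = x0 /\
    (forall z, cover x0 z <-> exists y, cover x1 y /\ @le X z (phiS y)).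

Definition nvec (k : nat) := {ffun 'I_k -> nat}.

Definition vle (k : nat) (x y : nvec k) : Prop := forall i, x i <= y i.

(* x + b - a, meant to be used when a <= x. *)
Definition vupd (k : nat) (x a b : nvec k) : nvec k := [ffun i => x i + b i - a i].

Record petri_net (k : nat) := PetriNet {
  pn_T : finType;
  pn_pre : pn_T -> nvec k;
  pn_post : pn_T -> nvec k
}.

Definition pn_tr (k : nat) (N : petri_net k) (t : pn_T N) (x : nvec k)
  : option (nvec k) :=
  if [forall i, pn_pre t i <= x i] then Some (vupd x (pn_pre t) (pn_post t))
  else None.

Definition pn_ofts (k : nat) (N : petri_net k) : ofts :=
  @Ofts (nvec k) (@vle k) (pn_T N) (@pn_tr k N).

Record vass (k : nat) := Vass {
  vs_Q : finType;
  vs_T : finType;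
  vs_src : vs_T -> vs_Q;
  vs_tgt : vs_T -> vs_Q;
  vs_pre : vs_T -> nvec k;
  vs_post : vs_T -> nvec k
}.

Definition vass_state (k : nat) (V : vass k) : Type := (vs_Q V * nvec k)%type.

Definition vass_le (k : nat) (V : vass k) (s s' : vass_state V) : Prop :=
  s.1 = s'.1 /\ vle s.2 s'.2.

Definition vass_tr (k : nat) (V : vass k) (t : vs_T V) (s : vass_state V)
  : option (vass_state V) :=
  if (s.1 == vs_src t) && [forall i, vs_pre t i <= s.2 i]
  then Some (vs_tgt t, vupd s.2 (vs_pre t) (vs_post t))
  else None.

Definition vass_ofts (k : nat) (V : vass k) : ofts :=
  @Ofts (vass_state V) (@vass_le k V) (vs_T V) (@vass_tr k V).

From mathcomp Require Import all_boot zify.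
From Stdlib Require Import Classical ClassicalEpsilon.
Set Implicit Arguments. Unset Strict Implicit. Unset Printing Implicit Defensive.

(* A system is cover-flattable from [x0] as soon as every state reachable from
   [x0] is dominated by a state reached along a bounded language
   [w_1^* ... w_n^*]: unfolding the system along the prefixes of that language
   gives a flat system whose cover maps onto the cover of [x0].

   For a VASS, such a language is built by a Karp-Miller argument, by
   induction on the set [O] of omega-coordinates (those that may start with
   any value), from larger to smaller sets. A run whose trace outside [O] has
   no two comparable positions follows a bad word, and there are finitely many
   of these by Dickson's and Koenig's lemmas. Otherwise the run contains a loop
   that does not decrease any coordinate outside [O]: if it changes none of
   them it can be cut out, yielding a shorter run; if it strictly increases
   some, iterating it lets these coordinates grow unboundedly, so they can be
   added to [O]. A Petri net is a VASS with a single control state. *)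

Section BoundedLanguages.
Variable A : Type.
Implicit Types (ws : seq (seq A)) (w : seq A).

Lemma in_bounded_nil ws : in_bounded ws [::].
Proof. by elim: ws => //= wi ws IH; exists 0, [::]. Qed.

Lemma in_bounded_cat ws1 ws2 w1 w2 :
  in_bounded ws1 w1 -> in_bounded ws2 w2 -> in_bounded (ws1 ++ ws2) (w1 ++ w2).
Proof.
elim: ws1 w1 => [|wi ws IH] w1 /=; first by move=> ->.
move=> [n [u [-> Hu]]] H2; exists n, (u ++ w2); rewrite catA; split => //.
exact: IH.
Qed.

Lemma in_bounded_catl ws1 ws2 w : in_bounded ws1 w -> in_bounded (ws1 ++ ws2) w.
Proof. by move=> H; rewrite -(cats0 w); apply: in_bounded_cat (in_bounded_nil _). Qed.

Lemma in_bounded_catr ws1 ws2 w : in_bounded ws2 w -> in_bounded (ws1 ++ ws2) w.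
Proof. by rewrite -{2}(cat0s w); apply: in_bounded_cat (in_bounded_nil _). Qed.

Lemma in_bounded_nseq w n : in_bounded [:: w] (flatten (nseq n w)).
Proof. by exists n, [::]; rewrite cats0. Qed.

Lemma in_bounded_self w : in_bounded [:: w] w.
Proof. by have := in_bounded_nseq w 1; rewrite /= cats0. Qed.

Definition bounded_prefix ws w := exists w', in_bounded ws (w ++ w').

Lemma bounded_prefix_nil ws : bounded_prefix ws [::].
Proof. by exists [::]; apply: in_bounded_nil. Qed.

(* A prefix of a word of [w_1^* ... w_k^*] consists of a word of
   [w_1^* ... w_(i-1)^* w_i^*] followed by a prefix of [w_i]; so every such
   prefix is bounded by the list [w_1; prefixes of w_1; ...; w_k; prefixes of w_k]. *)
Definition prefix_closure ws :=
  flatten [seq w :: [seq take j w | j <- iota 0 (size w).+1] | w <- ws].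

Lemma in_bounded_take_mem w (s : seq nat) j : j \in s ->
  in_bounded [seq take i w | i <- s] (take j w).
Proof.
elim: s => //= i s IH; rewrite in_cons; case: eqP => [->|_] /= H.
  by exists 1, [::]; rewrite /= !cats0; split => //; apply: in_bounded_nil.
by exists 0, (take j w); split => //; apply: IH.
Qed.

Lemma take_flatten_nseq w n m : m <= size (flatten (nseq n w)) ->
  exists a j, j <= size w /\
    take m (flatten (nseq n w)) = flatten (nseq a w) ++ take j w.
Proof.
elim: n m => [|n IH] m /=; first by exists 0, 0; rewrite take0.
rewrite size_cat take_cat; case: ltnP => Hm Hs.
  by exists 0, m; split; [exact: ltnW|].
have [|a [j [Hj ->]]] := IH (m - size w); first by lia.
by exists a.+1, j; rewrite /= catA.
Qed.

Lemma in_bounded_prefix_closure ws w :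
  bounded_prefix ws w -> in_bounded (prefix_closure ws) w.
Proof.
elim: ws w => [|w1 ws IH] w [w' H]; first by case: w H.
move: H => [n [u [E Hu]]].
have -> : prefix_closure (w1 :: ws) =
  (w1 :: [seq take j w1 | j <- iota 0 (size w1).+1]) ++ prefix_closure ws by [].
set F := flatten (nseq n w1) in E.
case: (leqP (size w) (size F)) => Hs.
  have Hw : w = take (size w) F.
    have := congr1 (take (size w)) E; rewrite take_size_cat // => Ew.
    rewrite {1}Ew.
    rewrite take_cat; case: ltnP => // Hge.
    have -> : size w = size F by lia.
    by rewrite subnn take0 cats0 take_size.
  rewrite Hw; have [a [j [Hj ->]]] := take_flatten_nseq Hs.
  apply: in_bounded_catl; exists a, (take j w1); split => //.
  by apply: in_bounded_take_mem; rewrite mem_iota.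
have Ht : take (size F) w = F.
  by move: (congr1 (take (size F)) E); rewrite take_cat Hs take_size_cat.
have Hd : u = drop (size F) w ++ w'.
  by move: (congr1 (drop (size F)) E); rewrite drop_cat Hs drop_size_cat.
rewrite -(cat_take_drop (size F) w) Ht; apply: in_bounded_cat.
  by exists n, [::]; rewrite cats0; split => //; apply: in_bounded_nil.
by apply: IH; exists w'; rewrite -Hd.
Qed.

End BoundedLanguages.

Section Runs.
Variable X : ofts.
Implicit Types (x y : st X) (w : seq (lab X)).

Lemma run_cat x w1 w2 : run x (w1 ++ w2) = obind (fun y => run y w2) (run x w1).
Proof. by elim: w1 x => //= a w1 IH x; case: (tr a x). Qed.

Lemma run_catP x w1 w2 y : run x (w1 ++ w2) = Some y ->
  exists z, run x w1 = Some z /\ run z w2 = Some y.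
Proof. by rewrite run_cat; case: (run x w1) => //= z H; exists z. Qed.

Lemma reachP x y : reach x y <-> exists w, run x w = Some y.
Proof.
split.
  elim => [z|a x' y' z H _ [w Hw]]; first by exists [::].
  by exists (a :: w) => /=; rewrite H.
case=> w; elim: w x => [|a w IH] x /=; first by case=> ->; constructor.
by case E: (tr a x) => [x'|] // H; apply: reach_step E (IH _ H).
Qed.

Hypothesis HX : is_ofts X.

Lemma ofts_le_refl x : le x x.
Proof. by case: HX. Qed.

Lemma ofts_le_trans x y z : le x y -> le y z -> le x z.
Proof. by case: HX => _ [_ [H _]]; apply: H. Qed.

Lemma run_mono x x' y w : le x x' -> run x w = Some y ->
  exists y', run x' w = Some y' /\ le y y'.
Proof.
case: HX => _ [_ [_ [Hdom Hmono]]].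
elim: w x x' => [|a w IH] x x' /= Hle; first by case=> <-; exists x'.
case E: (tr a x) => [z|] // H.
have [z' E'] := Hdom _ _ _ _ Hle E.
by rewrite E'; apply: IH (Hmono _ _ _ _ _ Hle E E') H.
Qed.

End Runs.

Definition dominated_along (X : ofts) (L : seq (seq (lab X))) (x0 : st X) :=
  forall y, reach x0 y ->
  exists w z, in_bounded L w /\ run x0 w = Some z /\ le y z.

Section Unfolding.
Variables (X : ofts) (L : seq (seq (lab X))).

(* Recording the history makes the system flat: the words it fires are all
   prefixes of words of the bounded language of [L]. *)
Definition unfolding_tr (a : lab X) (s : st X * seq (lab X)) :=
  match tr a s.1 with
  | Some x' => if excluded_middle_informative (bounded_prefix L (rcons s.2 a))
               then Some (x', rcons s.2 a) else None
  | None => None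
  end.

Definition unfolding : ofts :=
  @Ofts (st X * seq (lab X))%type eq (lab X) unfolding_tr.

Lemma unfolding_is_ofts : is_ofts unfolding.
Proof.
do !split => //=; first by move=> x y z -> ->.
  by move=> a x y x' <- ->; exists x'.
by move=> a x y x' y' <- -> [].
Qed.

Lemma unfolding_morphism : @morphism unfolding X fst id.
Proof.
move=> a s s' /=; rewrite /unfolding_tr; case: (@tr X a s.1) => // x'.
by case: excluded_middle_informative => // _ [<-].
Qed.

Lemma unfolding_run (s s' : st unfolding) w : run s w = Some s' ->
  bounded_prefix L s.2 ->
  [/\ s'.2 = s.2 ++ w, bounded_prefix L s'.2 & run s.1 w = Some s'.1].
Proof.
elim: w s => [|a w IH] s /=; first by case=> <-; rewrite cats0.
rewrite /unfolding_tr; case: (@tr X a s.1) => [x'|] //.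
case: excluded_middle_informative => // Hp H _.
by have [-> Hp' Hr] := IH _ H Hp; rewrite /= cat_rcons in Hp' Hr *.
Qed.

Lemma unfolding_run_lift x u w z : run x w = Some z ->
  bounded_prefix L (u ++ w) -> @run unfolding (x, u) w = Some (z, u ++ w).
Proof.
elim: w x u => [|a w IH] x u /=; first by move=> [<-] _; rewrite cats0.
case E: (tr a x) => [x'|] // H Hp; rewrite /unfolding_tr /= E.
case: excluded_middle_informative => [Hp'|[]].
  by rewrite /= (IH _ _ H) cat_rcons // -cat_rcons.
by case: Hp => w' Hw'; exists (w ++ w'); rewrite catA cat_rcons.
Qed.

Lemma unfolding_flat (x : st X) : @flat unfolding (x, [::]).
Proof.
exists (prefix_closure L) => w [s' Hs]; apply: in_bounded_prefix_closure.
by case: (unfolding_run Hs (bounded_prefix_nil L)) => /= <-.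
Qed.

Lemma unfolding_reach x y : @reach unfolding (x, [::]) y -> reach x y.1.
Proof.
case/reachP => w /unfolding_run [|_ _ Hr]; first exact: bounded_prefix_nil.
by apply/reachP; exists w.
Qed.

Lemma reach_unfolding x w z : in_bounded L w -> run x w = Some z ->
  @reach unfolding (x, [::]) (z, w).
Proof.
move=> Hw Hr; apply/reachP; exists w.
by apply: unfolding_run_lift Hr _; exists [::]; rewrite cats0.
Qed.

End Unfolding.

Theorem cover_flattable_of_dominated (X : ofts) (L : seq (seq (lab X))) x0 :
  is_ofts X -> dominated_along L x0 -> cover_flattable x0.
Proof.
move=> HX HL; exists (unfolding L), fst, id, (x0, [::]).
split; first exact: unfolding_is_ofts.
split; first exact: unfolding_morphism.
split; first by move=> s t /= ->; apply: ofts_le_refl.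
split; first exact: unfolding_flat.
split=> // z; split.
  case=> [x' [y [Hx [/reachP [w Hw] Hz]]]].
  have [y' [Hy' Hyy']] := run_mono HX Hx Hw.
  have [w2 [z2 [Hb [Hr2 Hle2]]]] := HL _ (proj2 (reachP _ _) (ex_intro _ _ Hy')).
  exists (z2, w2); split.
    by exists (x0, [::]), (z2, w2); split=> //; split=> //; apply: reach_unfolding.
  by have := ofts_le_trans HX Hz (ofts_le_trans HX Hyy' Hle2).
case=> [s [[x' [y' [/= -> [Hr /= ->]]] Hz]]].
by exists x0, y'.1; split; [apply: ofts_le_refl|split; [apply: unfolding_reach|]].
Qed.

Lemma exists_min_after (f : nat -> nat) a :
  exists n, a < n /\ forall m, a < m -> f n <= f m.
Proof.
apply: NNPP => Hnone.
have Hdesc : forall n, a < n -> exists m, a < m /\ f m < f n.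
  move=> n Hn; apply: NNPP => Hm; apply: Hnone; exists n; split => // m Ham.
  by rewrite leqNgt; apply/negP => Hlt; apply: Hm; exists m.
have Hbig : forall v n, a < n -> v <= f n.
  elim=> // v IH n Hn; have [m [Hm Hlt]] := Hdesc n Hn.
  by have := IH m Hm; lia.
by have := Hbig (f a.+1).+1 a.+1 (ltnSn a); lia.
Qed.

Lemma monotone_subsequence (f : nat -> nat) : exists g : nat -> nat,
  (forall n, g n < g n.+1) /\ forall n, f (g n) <= f (g n.+1).
Proof.
have next a : {n | a < n /\ forall m, a < m -> f n <= f m}.
  exact/constructive_indefinite_description/exists_min_after.
pose h := fix h n := if n is n'.+1 then sval (next (h n')) else 0.
exists (fun n => h n.+1); split => n; first by case: (svalP (next (h n.+1))).
have [Hlt1 Hmin] := svalP (next (h n)).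
have [Hlt2 _] := svalP (next (h n.+1)).
by apply: Hmin; rewrite /= in Hlt1 Hlt2 *; lia.
Qed.

Lemma dickson_coords k (F : nat -> nvec k) (s : seq 'I_k) : exists g : nat -> nat,
  (forall n, g n < g n.+1) /\
  forall i, i \in s -> forall n m, n <= m -> F (g n) i <= F (g m) i.
Proof.
elim: s => [|i s [g1 [Hg1 H1]]]; first by exists id.
have [g2 [Hg2 H2]] := monotone_subsequence (fun n => F (g1 n) i).
have Hg1_homo : {homo g1 : a b / a < b} by apply: homo_ltn => //; exact: ltn_trans.
have Hg2_homo : {homo g2 : a b / a <= b}.
  by apply: homo_leq => // [|n]; [exact: leq_trans|exact: ltnW].
exists (g1 \o g2); split => [n|j]; first exact/Hg1_homo/Hg2.
rewrite in_cons => /orP [/eqP ->|Hj] n m Hnm; last exact/H1/Hg2_homo.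
apply: (@homo_leq _ (fun n => F (g1 (g2 n)) i) leq) => //.
exact: leq_trans.
Qed.

Lemma vass_dickson k (V : vass k) (f : nat -> vass_state V) :
  exists i j, i < j /\ vass_le (f i) (f j).
Proof.
have [g [Hg Hmono]] := dickson_coords (fun n => (f n).2) (enum 'I_k).
have Hg_homo : {homo g : a b / a < b} by apply: homo_ltn => //; exact: ltn_trans.
(* Among [#|Q| + 1] terms of the monotone subsequence two share their control state. *)
pose h (n : 'I_#|vs_Q V|.+1) := (f (g n)).1.
have [n [m [Hnm Eh]]] : exists n m : 'I_#|vs_Q V|.+1, n < m /\ h n = h m.
  apply: NNPP => Hinj.
  suff /leq_card : injective h by rewrite card_ord; lia.
  move=> n m Ehnm; apply: val_inj; apply: NNPP => Hne.
  by case: (ltngtP n m) Hne => // [Hlt|Hlt] _; apply: Hinj; [exists n, m|exists m, n].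
exists (g n), (g m); split; first exact: Hg_homo.
by split => // i; apply: Hmono; [rewrite mem_enum|exact: ltnW].
Qed.

Lemma not_acc_chain (T : Type) (R : T -> T -> Prop) (a : T) : ~ Acc R a ->
  exists f : nat -> T, f 0 = a /\ forall n, R (f n.+1) (f n).
Proof.
move=> Ha.
have next (x : {x | ~ Acc R x}) : {y : {x | ~ Acc R x} | R (sval y) (sval x)}.
  apply: constructive_indefinite_description.
  case: x => x Hx /=; apply: NNPP => Hno; apply: Hx; constructor => y Hy.
  by apply: NNPP => Hy'; apply: Hno; exists (exist _ y Hy').
pose f := fix f n := if n is n'.+1 then sval (next (f n')) else exist _ a Ha.
by exists (fun n => sval (f n)); split => // n; exact: svalP (next (f n)).
Qed.

Section VassRuns.
Variables (k : nat) (V : vass k).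
Notation vrun := (@run (vass_ofts V)).

Definition addv (x d : nvec k) : nvec k := [ffun i => x i + d i].

Definition patch (O : {set 'I_k}) (x c : nvec k) : nvec k :=
  [ffun i => if i \in O then c i else x i].

Lemma vass_is_ofts : is_ofts (vass_ofts V).
Proof.
split; first by move=> x; split.
split.
  move=> [q x] [q' y] [/= -> Hxy] [_ Hyx]; congr pair; apply/ffunP => i.
  by apply/eqP; rewrite eqn_leq Hxy Hyx.
split.
  move=> x y z [Exy Hxy] [Eyz Hyz]; split; first by rewrite Exy.
  by move=> i; exact: leq_trans (Hxy i) (Hyz i).
split.
  move=> t [q x] [q' y] x' [/= <- Hxy] /=; rewrite /vass_tr /=.
  case: ifP => // /andP [-> /forallP Hpre] _; rewrite ifT; first by eexists.
  by apply/forallP => i; exact: leq_trans (Hpre i) (Hxy i).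
move=> t [q x] [q' y] x' y' [/= <- Hxy] /=; rewrite /vass_tr /=.
case: ifP => // /andP [_ /forallP Hx] [<-].
case: ifP => // /andP [_ /forallP Hy] [<-]; split => // i /=.
by rewrite !ffunE; have := Hx i; have := Hy i; have := Hxy i; lia.
Qed.

Lemma vass_le_refl (s : vass_state V) : vass_le s s.
Proof. exact: ofts_le_refl vass_is_ofts s. Qed.

Lemma vass_le_trans (s t u : vass_state V) : vass_le s t -> vass_le t u -> vass_le s u.
Proof. exact: ofts_le_trans vass_is_ofts s t u. Qed.

Lemma vass_tr_addv t (s s' : vass_state V) d : vass_tr t s = Some s' ->
  vass_tr t (s.1, addv s.2 d) = Some (s'.1, addv s'.2 d).
Proof.
rewrite /vass_tr /=; case: ifP => // /andP [-> /forallP Hpre] [<-] /=.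
rewrite ifT; last by apply/forallP => i; rewrite ffunE; have := Hpre i; lia.
by congr (Some (_, _)); apply/ffunP => i; rewrite !ffunE; have := Hpre i; lia.
Qed.

Lemma vass_run_addv (s y : vass_state V) w d : vrun s w = Some y ->
  vrun (s.1, addv s.2 d) w = Some (y.1, addv y.2 d).
Proof.
elim: w s => [|t w IH] s /=; first by case=> <-.
by case E: (vass_tr t s) => [s'|] // H; rewrite (vass_tr_addv d E); apply: IH.
Qed.

Lemma vass_run_pump (O : {set 'I_k}) q a b u : vrun (q, a) u = Some (q, b) ->
  (forall i, i \notin O -> a i <= b i) -> forall (N : nat) (T : nvec k),
  exists d b' : nvec k, (forall i, i \notin O -> d i = 0) /\
    vrun (q, addv a d) (flatten (nseq N u)) = Some (q, b') /\
    (forall i, i \in O -> T i <= b' i) /\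
    (forall i, i \notin O -> b' i = a i + N * (b i - a i)).
Proof.
move=> Hu Hab N T; elim: N => [|N [d [b' [Hd [HuN [HT Hb']]]]]].
  pose d := [ffun i => if i \in O then T i else 0].
  exists d, (addv a d); split; first by move=> i /negbTE Hi; rewrite ffunE Hi.
  split=> //; split => i Hi; rewrite !ffunE ?Hi ?(negbTE Hi); lia.
(* Fire one more copy of [u] first, from [a] plus [e] extra tokens on [O]: it
   ends in the former start state [a + d] shifted by [g]. *)
pose e := [ffun i => if i \in O then a i else 0].
pose g := [ffun i => if i \in O then b i else b i - a i].
exists (addv d e), (addv b' g).
split; first by move=> i Hi; rewrite !ffunE Hd // (negbTE Hi).
split.
  rewrite /= run_cat (vass_run_addv (addv d e) Hu) /=.
  have -> : addv b (addv d e) = addv (addv a d) g.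
    apply/ffunP => i; rewrite !ffunE; case: ifP => Hi; first lia.
    by rewrite Hd ?Hi //; have := Hab i; rewrite Hi => /(_ isT); lia.
  exact: vass_run_addv g HuN.
split=> i Hi; rewrite !ffunE ?Hi ?(negbTE Hi); first by have := HT i Hi; lia.
by rewrite Hb' //; have := Hab i Hi; nia.
Qed.

Lemma vass_run_pump_patch (O O' : {set 'I_k}) q a b u (c : nvec k) :
  vrun (q, a) u = Some (q, b) ->
  (forall i, i \notin O -> a i <= b i) ->
  (forall i, i \in O' -> i \notin O -> a i < b i) ->
  exists N (d b' : nvec k), (forall i, i \notin O -> d i = 0) /\
    vrun (q, addv a d) (flatten (nseq N u)) = Some (q, b') /\
    vle (patch O' b c) b'.
Proof.
(* [N] iterations lift the strictly increasing coordinates above [c], and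
   [N >= 1] keeps the other ones above [b]. *)
move=> Hu Hab Hgain; pose N := (\max_i c i).+1.
have [d [b' [Hd [HuN [HO HnO]]]]] := vass_run_pump Hu Hab N (patch O' b c).
exists N, d, b'; split=> //; split=> // i.
case: (boolP (i \in O)) => HiO; first exact: HO.
have Hci : c i <= \max_j c j := leq_bigmax i.
rewrite HnO // ffunE; have := Hab i HiO; case: ifP => HiO'; last nia.
by have := Hgain i HiO' HiO; nia.
Qed.

End VassRuns.

Section KarpMiller.
Variables (k : nat) (V : vass k).
Notation state := (vass_state V).
Notation vrun := (@run (vass_ofts V)).

(* The coordinates in [O] are the omega-coordinates: [(q, x)] stands for all
   the states [(q, patch O x c)]. *)
Definition omega_covered (O : {set 'I_k}) := forall (q : vs_Q V) (x : nvec k),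
  exists L : seq (seq (vs_T V)), forall (c : nvec k) (y : state),
  @reach (vass_ofts V) (q, patch O x c) y ->
  exists (c' : nvec k) (w : seq (vs_T V)) (z : state),
    in_bounded L w /\ vrun (q, patch O x c') w = Some z /\ vass_le y z.

Variable O : {set 'I_k}.
Hypothesis omega_covered_above :
  forall O' : {set 'I_k}, O \proper O' -> omega_covered O'.
Variables (q0 : vs_Q V) (x0 : nvec k).

Definition start (c : nvec k) : state := (q0, patch O x0 c).
Definition agree (s t : state) := s.1 = t.1 /\ forall i, i \notin O -> s.2 i = t.2 i.
Definition le_off (s t : state) := s.1 = t.1 /\ forall i, i \notin O -> s.2 i <= t.2 i.

Lemma agree_run w (s t s' t' : state) : agree s t -> vrun s w = Some s' ->
  vrun t w = Some t' -> agree s' t'.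
Proof.
elim: w s t => [|a w IH] s t /=; first by move=> H [<-] [<-].
move=> [Hq Hi]; rewrite /vass_tr.
case: ifP => // /andP [/eqP Hs _]; case: ifP => // /andP [/eqP Ht _].
by apply: IH; split => // i Hn; rewrite !ffunE (Hi i Hn).
Qed.

Lemma agree_start c1 c2 : agree (start c1) (start c2).
Proof. by split => // i Hi; rewrite !ffunE (negbTE Hi). Qed.

Lemma start_addv (c d : nvec k) : (forall i, i \notin O -> d i = 0) ->
  start (addv c d) = ((start c).1, addv (start c).2 d).
Proof.
move=> Hd; congr pair; apply/ffunP => i; rewrite !ffunE.
by case: ifP => // /negbT Hi; rewrite Hd // addn0.
Qed.

Definition feasible (v : seq (vs_T V)) := exists c y, vrun (start c) v = Some y.

Definition increasing_pair (v : seq (vs_T V)) m1 m2 := exists c s1 s2,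
  vrun (start c) (take m1 v) = Some s1 /\ vrun (start c) (take m2 v) = Some s2 /\
  le_off s1 s2.

(* Bad words are the branches of the Karp-Miller tree that cannot be
   accelerated; there are finitely many of them by Dickson's lemma. *)
Definition bad (v : seq (vs_T V)) :=
  forall m1 m2, m1 < m2 -> m2 <= size v -> ~ increasing_pair v m1 m2.

Definition bad_extension (v' v : seq (vs_T V)) :=
  exists t, v' = rcons v t /\ bad v' /\ feasible v'.

Lemma acc_bad_extension : Acc bad_extension [::].
Proof.
apply: NNPP => /(@not_acc_chain _ bad_extension) [v [v0 Hv]].
have Hsize n : size (v n) = n.
  by elim: n => [|n IH]; [rewrite v0|have [t [-> _]] := Hv n; rewrite size_rcons IH].
have Hprefix n d : take n (v (n + d)) = v n.
  elim: d => [|d IH]; first by rewrite addn0 take_oversize ?Hsize.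
  rewrite addnS; have [t [-> _]] := Hv (n + d).
  by rewrite -cats1 takel_cat ?IH // Hsize leq_addr.
have Hrun n : exists p : nvec k * state, vrun (start p.1) (v n) = Some p.2.
  case: n => [|n]; first by exists (x0, start x0); rewrite v0.
  by have [_ [_ [_ [c [y Hy]]]]] := Hv n; exists (c, y).
pose cy n := sval (constructive_indefinite_description _ (Hrun n)).
have Hcy n : vrun (start (cy n).1) (v n) = Some (cy n).2.
  exact: svalP (constructive_indefinite_description _ (Hrun n)).
have [i [j [Hij [Hq Hle]]]] := vass_dickson (fun n => (cy n).2).
have [_ [_ [Hbad _]]] := Hv j.-1; rewrite prednK ?(leq_ltn_trans _ Hij) // in Hbad.
apply: (Hbad i j Hij); first by rewrite Hsize.
have Hvi : take i (v j) = v i by rewrite -(subnKC (ltnW Hij)) Hprefix.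
have := Hcy j; rewrite -{1}(cat_take_drop i (v j)) => /run_catP [s1 [Hs1 _]].
exists (cy j).1, s1, (cy j).2; split=> //.
split; first by rewrite take_oversize ?Hsize.
rewrite Hvi in Hs1; have [Hq' Hi'] := agree_run (agree_start _ _) (Hcy i) Hs1.
by split=> [|l Hl]; [rewrite -Hq' Hq|rewrite -Hi' //; exact: Hle].
Qed.


Definition covered (L : seq (seq (vs_T V))) (y : state) := exists c w z,
  in_bounded L w /\ vrun (start c) w = Some z /\ vass_le y z.

Definition covered_shorter (n : nat) (y : state) := exists c w z,
  size w < n /\ vrun (start c) w = Some z /\ vass_le y z.

Definition handles (L : seq (seq (vs_T V))) (v : seq (vs_T V)) :=
  forall c w y, vrun (start c) (v ++ w) = Some y ->
  covered L y \/ covered_shorter (size (v ++ w)) y.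

Lemma handles_catl L1 L2 v : handles L1 v -> handles (L1 ++ L2) v.
Proof.
move=> H c w y /H [[c' [w' [z [Hw Hz]]]]|]; last by right.
by left; exists c', w', z; split => //; apply: in_bounded_catl.
Qed.

Lemma handles_catr L1 L2 v : handles L2 v -> handles (L1 ++ L2) v.
Proof.
move=> H c w y /H [[c' [w' [z [Hw Hz]]]]|]; last by right.
by left; exists c', w', z; split => //; apply: in_bounded_catr.
Qed.

Lemma handles_rcons_all v : (forall t, exists L, handles L (rcons v t)) ->
  exists L, forall t, handles L (rcons v t).
Proof.
move=> Hext.
suff [L HL] : exists L, forall t, t \in enum (vs_T V) -> handles L (rcons v t).
  by exists L => t; apply: HL; rewrite mem_enum.
elim: (enum _) => [|t s [L HL]]; first by exists [::].
have [Lt HLt] := Hext t; exists (Lt ++ L) => t'.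
rewrite in_cons => /orP [/eqP ->|Ht']; first exact: handles_catl.
exact/handles_catr/HL.
Qed.

Lemma run_start_split v m c0 (A0 B0 : state) :
  vrun (start c0) (take m v) = Some A0 -> vrun (start c0) v = Some B0 ->
  forall c w y, vrun (start c) (v ++ w) = Some y ->
  exists A B, [/\ vrun (start c) (take m v) = Some A, vrun A (drop m v) = Some B,
                  vrun B w = Some y, agree A0 A & agree B0 B].
Proof.
move=> HA0 HB0 c w y /run_catP [B [HB HBy]].
have := HB; rewrite -{1}(cat_take_drop m v) => /run_catP [A [HA HAB]].
exists A, B; split => //; first exact: agree_run (agree_start c0 c) HA0 HA.
exact: agree_run (agree_start c0 c) HB0 HB.
Qed.

(* A loop that leaves the coordinates outside [O] unchanged can be cut out,
   after adding on [O] the tokens it would have produced. *)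
Lemma handles_flat_loop v m c0 (A0 B0 : state) : m < size v ->
  vrun (start c0) (take m v) = Some A0 -> vrun (start c0) v = Some B0 ->
  agree A0 B0 -> handles [::] v.
Proof.
move=> Hm HA0 HB0 [Hq0 Hi0] c w y H; right.
have [A [B [HA _ HBy [HqA HiA] [HqB HiB]]]] := run_start_split HA0 HB0 H.
pose d := [ffun i => if i \in O then B.2 i else 0].
have Hd i : i \notin O -> d i = 0 by rewrite ffunE => /negbTE ->.
have HBA : vass_le B (A.1, addv A.2 d).
  split; first by rewrite -HqB -Hq0 HqA.
  move=> i; rewrite !ffunE; case: ifP => HiO; first exact: leq_addl.
  by rewrite -HiB ?HiO // -Hi0 ?HiO // HiA ?HiO // addn0.
have [y' [Hy' Hyy']] := run_mono (vass_is_ofts V) HBA HBy.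
exists (addv c d), (take m v ++ w), y'; split.
  by rewrite !size_cat size_take Hm ltn_add2r.
by split => //; rewrite run_cat start_addv // (vass_run_addv d HA).
Qed.

Lemma proper_setU_gain (A0 B0 : state) : le_off A0 B0 -> ~ agree A0 B0 ->
  O \proper O :|: [set i | A0.2 i < B0.2 i].
Proof.
move=> [Hq0 Hle0] Hnag.
have [l [Hl Hne]] : exists l, l \notin O /\ A0.2 l <> B0.2 l.
  apply: NNPP => Hn; apply: Hnag; split => // i Hi.
  by apply: NNPP => Hne; apply: Hn; exists i.
apply/properP; split; first exact: subsetUl.
by exists l => //; rewrite !inE (negbTE Hl) /= ltn_neqAle (Hle0 l Hl) andbT; apply/eqP.
Qed.

(* A loop that strictly increases some coordinates outside [O] is pumped: these
   coordinates become omega-coordinates, and the induction hypothesis applies. *)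
Lemma handles_gain_loop v m c0 (A0 B0 : state) :
  vrun (start c0) (take m v) = Some A0 -> vrun (start c0) v = Some B0 ->
  le_off A0 B0 -> ~ agree A0 B0 -> exists L, handles L v.
Proof.
move=> HA0 HB0 Hle Hnag; have HO' := proper_setU_gain Hle Hnag.
move: Hle => [Hq0 Hle0]; set O' := O :|: _ in HO'.
have [Lh HLh] := omega_covered_above HO' B0.1 B0.2.
exists ([:: take m v; drop m v] ++ Lh) => c w y H; left.
have [[qa a] [[qb b] [HA HAB HBy [/= HqA HiA] [/= HqB HiB]]]] :=
  run_start_split HA0 HB0 H.
have Eqb : qb = qa by rewrite -HqB -HqA Hq0.
move: HqB HAB HBy; rewrite Eqb => HqB HAB HBy.
have Hpatch (c' : nvec k) : patch O' B0.2 c' = patch O' b c'.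
  apply/ffunP => i; rewrite !ffunE; case: ifP => // /negbT.
  by rewrite !inE negb_or => /andP [HiO _]; rewrite HiB.
have HB : (qa, b) = (B0.1, patch O' B0.2 b).
  by rewrite Hpatch HqB; congr pair; apply/ffunP => i; rewrite ffunE; case: ifP.
have [c4 [w4 [z4 [Hw4 [Hr4 Hyz4]]]]] : exists c4 w4 z4, in_bounded Lh w4 /\
    vrun (B0.1, patch O' B0.2 c4) w4 = Some z4 /\ vass_le y z4.
  by apply: (HLh b); apply/reachP; exists w; rewrite -HB.
have [N [d [b' [Hd [HuN Hle]]]]] : exists N (d b' : nvec k),
    (forall i, i \notin O -> d i = 0) /\
    vrun (qa, addv a d) (flatten (nseq N (drop m v))) = Some (qa, b') /\
    vle (patch O' b c4) b'.
  apply: vass_run_pump_patch HAB _ _ => [i HiO|i].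
    by rewrite -HiA // -HiB //; apply: Hle0.
  by rewrite !inE => /orP [->|Hlt] // HiO; rewrite -HiA // -HiB.
have Hle4 : vass_le (B0.1, patch O' B0.2 c4) (qa, b').
  by split; [rewrite -HqB|rewrite /= Hpatch].
have [z5 [Hr5 Hz45]] := run_mono (vass_is_ofts V) Hle4 Hr4.
exists (addv c d), (take m v ++ flatten (nseq N (drop m v)) ++ w4), z5; split.
  by apply: (in_bounded_cat (ws1 := [:: _]) (in_bounded_self _));
    apply: (in_bounded_cat (ws1 := [:: _]) (in_bounded_nseq _ _)).
split; last exact: vass_le_trans Hyz4 Hz45.
by rewrite run_cat start_addv // (vass_run_addv d HA) /= run_cat HuN.
Qed.

Lemma handles_not_bad v t : bad v -> ~ bad (rcons v t) ->
  exists L, handles L (rcons v t).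
Proof.
move=> Hbad Hnbad.
have [m1 [m2 [Hm12 Hm2 [c0 [A0 [B0 [HA0 [HB0 Hle]]]]]]]] : exists m1 m2,
    [/\ m1 < m2, m2 <= size (rcons v t) & increasing_pair (rcons v t) m1 m2].
  by apply: NNPP => Hn; apply: Hnbad => m1 m2 H1 H2 H3; apply: Hn; exists m1, m2.
have Em2 : m2 = size (rcons v t).
  move: Hm2; rewrite size_rcons leq_eqVlt ltnS => /orP [/eqP //|Hle2].
  exfalso; apply: (Hbad m1 m2 Hm12 Hle2); exists c0, A0, B0.
  by rewrite -!cats1 !takel_cat in HA0 HB0 => //; lia.
rewrite Em2 take_size in HB0.
case: (classic (agree A0 B0)) => Hag; last exact: handles_gain_loop HA0 HB0 Hle Hag.
by exists [::]; apply: handles_flat_loop HA0 HB0 Hag; rewrite -Em2.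
Qed.

Lemma handles_bad v : Acc bad_extension v -> bad v -> exists L, handles L v.
Proof.
elim=> {}v _ IH Hbad.
have Hext t : exists L, handles L (rcons v t).
  case: (classic (feasible (rcons v t))) => Hft; last first.
    exists [::] => c w y /run_catP [z [Hz _]].
    by exfalso; apply: Hft; exists c, z.
  case: (classic (bad (rcons v t))) => Hbt; last exact: handles_not_bad.
  by apply: IH => //; exists t.
have [L HL] := handles_rcons_all Hext.
exists ([:: v] ++ L) => c [|t w] y H.
  left; exists c, v, y; split; first exact/in_bounded_catl/in_bounded_self.
  by rewrite cats0 in H; split => //; apply: vass_le_refl.
by rewrite -cat_rcons in H *; apply: handles_catr (HL t) c w y H.
Qed.

Lemma covered_all : exists L, forall c w y, vrun (start c) w = Some y -> covered L y.
Proof.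
have [|L HL] := handles_bad acc_bad_extension; first by move=> m1 m2 /= H1 H2; lia.
exists L => c w; elim: {w}(size w) {-2}w (leqnn (size w)) c => [|n IHn] w Hs c y H.
  by case: (HL c w y H) => // [[c2 [w2 [y2 [Hlt _]]]]]; have := leq_trans Hlt Hs.
case: (HL c w y H) => // [[c2 [w2 [y2 [Hlt [Hr Hle]]]]]].
have [|c3 [w3 [z3 [H3 [H4 H5]]]]] := IHn w2 _ c2 y2 Hr.
  by have := leq_trans Hlt Hs.
by exists c3, w3, z3; do 2!split => //; apply: vass_le_trans Hle H5.
Qed.

End KarpMiller.

Lemma omega_covered_step k (V : vass k) (O : {set 'I_k}) :
  (forall O' : {set 'I_k}, O \proper O' -> omega_covered V O') -> omega_covered V O.
Proof.
move=> Habove q x; have [L HL] := covered_all Habove q x.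
by exists L => c y /reachP [w Hw]; apply: HL Hw.
Qed.

Lemma omega_covered_all k (V : vass k) (O : {set 'I_k}) : omega_covered V O.
Proof.
move: {2}#|~: O| (leqnn #|~: O|) => n; elim: n O => [|n IH] O Hn;
  apply: omega_covered_step => O' /properP [HOO' [i HiO' HiO]].
  by move: Hn; rewrite leqn0 cards_eq0 => /eqP /setP /(_ i); rewrite !inE HiO.
apply: IH; rewrite -ltnS (leq_trans _ Hn) // proper_card // properC.
by apply/properP; split; [exact: HOO'|exists i].
Qed.

Lemma vass_dominated k (V : vass k) (x0 : vass_state V) :
  exists L, @dominated_along (vass_ofts V) L x0.
Proof.
case: x0 => q x; have [L HL] := @omega_covered_all k V set0 q x.
have Epatch c : patch set0 x c = x by apply/ffunP => i; rewrite ffunE inE.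
exists L => y Hy; have [c' [w [z [Hw [Hr Hyz]]]]] := HL x y ltac:(by rewrite Epatch).
by exists w, z; rewrite Epatch in Hr.
Qed.

Definition petri_vass k (N : petri_net k) : vass k :=
  @Vass k unit (pn_T N) (fun _ => tt) (fun _ => tt) (@pn_pre k N) (@pn_post k N).

Lemma petri_vass_run k (N : petri_net k) x w :
  @run (vass_ofts (petri_vass N)) (tt, x) w =
  omap (pair tt) (@run (pn_ofts N) x w).
Proof.
elim: w x => //= t w IH x; rewrite /vass_tr /pn_tr /=.
by case: ifP => _; rewrite ?IH.
Qed.

Lemma petri_is_ofts k (N : petri_net k) : is_ofts (pn_ofts N).
Proof.
split; first by move=> x i.
split.
  by move=> x y Hxy Hyx; apply/ffunP => i; apply/eqP; rewrite eqn_leq Hxy Hyx.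
split; first by move=> x y z Hxy Hyz i; exact: leq_trans (Hxy i) (Hyz i).
split.
  move=> t x y x' Hxy /=; rewrite /pn_tr; case: ifP => // /forallP Hpre _.
  by rewrite ifT; [eexists|apply/forallP => i; exact: leq_trans (Hpre i) (Hxy i)].
move=> t x y x' y' Hxy /=; rewrite /pn_tr.
case: ifP => // /forallP Hx [<-]; case: ifP => // /forallP Hy [<-] i.
by rewrite !ffunE; have := Hx i; have := Hy i; have := Hxy i; lia.
Qed.

Lemma petri_dominated k (N : petri_net k) (x0 : nvec k) :
  exists L, @dominated_along (pn_ofts N) L x0.
Proof.
have [L HL] := vass_dominated (tt : vs_Q (petri_vass N), x0).
exists L => y /reachP [w Hw].
have [|w' [z [Hw' [Hr [_ Hyz]]]]] := HL (tt, y).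
  by apply/reachP; exists w; rewrite petri_vass_run Hw.
move: Hr; rewrite petri_vass_run; case Ez: (@run (pn_ofts N) x0 w') => [z'|] //= [Ez'].
by exists w', z'; rewrite -Ez' in Hyz.
Qed.

Theorem corollary5p27 :
  (forall (k : nat) (N : petri_net k) (x0 : st (pn_ofts N)),
      is_ofts (pn_ofts N) /\ cover_flattable x0) /\
  (forall (k : nat) (V : vass k) (x0 : st (vass_ofts V)),
      is_ofts (vass_ofts V) /\ cover_flattable x0).
Proof.
split=> k.
  move=> N x0; have [L HL] := petri_dominated N x0.
  by split; [|apply: cover_flattable_of_dominated HL]; apply: petri_is_ofts.
move=> V x0; have [L HL] := vass_dominated x0.
by split; [|apply: cover_flattable_of_dominated HL]; apply: vass_is_ofts.
Qed.
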